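(* Let $G$ be a finite graph, let $L=\{L_v\subset \mathbb{R}:v\in V(G)\}$ be an assignment of finite lists of real numbers to the vertices of $G$, and suppose that $f:V(G)\to \mathbb{Z}$ satisfies $f(v)<|L_v|$ for every $v\in V(G)$ and $\sum_{v\in V(G)} f(v)=|E(G)|-1$. If $G$ is not $L$-colorable, then for every color $c\in\mathbb{R}$, $$\sum_{z\in V(G)} [x^{f+1_z}]\,P_G\cdot \chi_{L,c}(z) = 0.$$
   Context: An $L$-coloring of $G$ is a function $\varphi\in\prod_{v\in V(G)}L_v$ (i.e. $\varphi(v)\in L_v$ for all $v$) with $\varphi(u)\neq\varphi(v)$ for every edge $uv\in E(G)$; $G$ is $L$-colorable if an $L$-coloring exists. The graph polynomial $P_G$ is the polynomial in variables $x_v$ ($v\in V(G)$) defined by fixing an orientation $\vec G$ of $G$ and setting $P_G=\prod_{(u,v)\in E(\vec G)}(x_v-x_u)$; it is determined up to sign by $G$. For a function $g:V(G)\to\mathbb{Z}$ with nonnegative values, $x^g=\prod_{v\in V(G)}x_v^{g(v)}$, and $[x^g]\,q$ denotes the coefficient of the monomial $x^g$ in a polynomial $q$ (taken to be $0$ if $g$ has a negative value). For $z\in V(G)$, $1_z:V(G)\to\{0,1\}$ is the function with $1_z(z)=1$ and $1_z(u)=0$ for $u\neq z$. For a color $c$, the characteristic vector $\chi_{L,c}:V(G)\to\{0,1\}$ is defined by $\chi_{L,c}(v)=1$ if $c\in L_v$ and $\chi_{L,c}(v)=0$ otherwise. *)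

From HB Require Import structures.
From mathcomp Require Import all_boot all_order all_algebra.
From mathcomp Require Import finmap.
From mathcomp Require Import mpoly.
From mathcomp Require Import reals.

Set Implicit Arguments.
Unset Strict Implicit.
Unset Printing Implicit Defensive.

Import Order.TTheory GRing.Theory Num.Theory.
Local Open Scope ring_scope.
Local Open Scope fset_scope.

Definition simple_graph (n : nat) (e : rel 'I_n) : Prop :=
  ssrbool.symmetric e /\ ssrbool.irreflexive e.

Definition edges (n : nat) (e : rel 'I_n) : {set 'I_n * 'I_n} :=
  [set p : 'I_n * 'I_n | (p.1 < p.2)%N && e p.1 p.2].

(* Graph polynomial, for the orientation u -> v whenever u < v. *)
Definition graph_poly (n : nat) (e : rel 'I_n) : {mpoly int[n]} :=
  \prod_(p in edges e) ('X_p.2 - 'X_p.1).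

(* [x^g] q for g : V -> int, taken to be 0 if g has a negative value. *)
Definition coef_int (n : nat) (g : 'I_n -> int) (q : {mpoly int[n]}) : int :=
  if [forall v, (0 <= g v)%R]
  then q@_[multinom [tuple (absz (g i)) | i < n]]
  else 0.

Definition ind1 (n : nat) (z : 'I_n) : 'I_n -> int :=
  fun u => (u == z)%:R.

Definition is_L_coloring (R : realType) (n : nat) (e : rel 'I_n)
    (L : 'I_n -> {fset R}) (phi : 'I_n -> R) : Prop :=
  (forall v, phi v \in L v) /\ (forall u v, e u v -> phi u != phi v).

Definition L_colorable (R : realType) (n : nat) (e : rel 'I_n)
    (L : 'I_n -> {fset R}) : Prop :=
  exists phi : 'I_n -> R, is_L_coloring e L phi.

Definition chi (R : realType) (n : nat) (L : 'I_n -> {fset R}) (c : R)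
    : 'I_n -> int :=
  fun v => (c \in L v)%:R.

From HB Require Import structures.
From mathcomp Require Import all_boot all_order all_algebra.
From mathcomp Require Import finmap.
From mathcomp Require Import mpoly.
From mathcomp Require Import reals.
From mathcomp Require Import ring zify.
Import Order.TTheory GRing.Theory Num.Theory.
Set Implicit Arguments.
Unset Strict Implicit.
Unset Printing Implicit Defensive.
Local Open Scope ring_scope.

(* For sets S_1, ..., S_n of sizes g_i + 1 and a polynomial P, the
   weighted sum of P over the grid S_1 x ... x S_n with weights
   prod_i prod_(b in S_i, b <> a_i) (a_i - b)^-1 equals
   sum_m [x^m]P * prod_i D(S_i, m_i), where D(S, m) is the divided difference
   of x^m on the nodes S: it vanishes for m < |S| - 1, equals 1 for
   m = |S| - 1 and the sum of S for m = |S|.  The graph polynomial vanishes on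
   every grid inside a non-colorable list assignment.  When deg P = sum g this
   kills [x^g]P (the Combinatorial Nullstellensatz); when deg P = sum g + 1 it
   gives sum_z [x^(g + 1_z)]P * sum(S_z) = 0.  Comparing this identity for S
   and for S with the colour c replaced by a fresh colour d leaves
   (d - c) * sum_z [x^(g + 1_z)]P * [c in S_z] = 0.  Choosing S_z as the first
   g_z + 1 colours of L_z is harmless: when g_z + 1 < |L_z|, the coefficient
   [x^(g + 1_z)]P is already 0 by the Nullstellensatz. *)

Section DividedDifferences.
Variable K : fieldType.
Implicit Types (s : seq K) (x y : K).

Definition nodal_weight s x : K := (\prod_(b <- s | b != x) (x - b))^-1.

Definition divdiff_exp s (m : nat) : K := \sum_(x <- s) x ^+ m * nodal_weight s x.

Lemma nodal_weight_cons_neq s x y :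
  y != x -> nodal_weight (x :: s) y = (y - x)^-1 * nodal_weight s y.
Proof. by move=> yx; rewrite /nodal_weight big_cons eq_sym yx invfM. Qed.

Lemma nodal_weight_cons_eq s x : nodal_weight (x :: s) x = nodal_weight s x.
Proof. by rewrite /nodal_weight big_cons eqxx. Qed.

Lemma divdiff_exp_cons_expS x s m : uniq (x :: s) ->
  divdiff_exp (x :: s) m.+1 = x * divdiff_exp (x :: s) m + divdiff_exp s m.
Proof.
case/andP=> xs _; rewrite /divdiff_exp !big_cons nodal_weight_cons_eq.
rewrite mulrDr -addrA exprS mulrA; congr (_ + _).
rewrite mulr_sumr -big_split /= !big_seq; apply: eq_bigr => y ys.
have yx : y != x by apply: contraNneq xs => <-.
have yx0 : y - x != 0 by rewrite subr_eq0.
by rewrite nodal_weight_cons_neq // exprS; field.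
Qed.

Lemma divdiff_exp_cons2 x y s m : uniq [:: x, y & s] ->
  divdiff_exp [:: x, y & s] m
    = (divdiff_exp (x :: s) m - divdiff_exp (y :: s) m) / (x - y).
Proof.
rewrite /= inE negb_or => /andP[/andP[xy xs] /andP[ys _]].
have xy0 : x - y != 0 by rewrite subr_eq0.
have yx0 : y - x != 0 by rewrite subr_eq0 eq_sym.
have weight_x : nodal_weight [:: x, y & s] x = (x - y)^-1 * nodal_weight s x.
  by rewrite nodal_weight_cons_eq nodal_weight_cons_neq.
have weight_y : nodal_weight [:: x, y & s] y = (y - x)^-1 * nodal_weight s y.
  by rewrite nodal_weight_cons_neq 1?eq_sym // nodal_weight_cons_eq.
have weight_tail z : z \in s -> nodal_weight [:: x, y & s] z
    = (nodal_weight (x :: s) z - nodal_weight (y :: s) z) / (x - y).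
  move=> zs; have zx : z != x by apply: contraNneq xs => <-.
  have zy : z != y by apply: contraNneq ys => <-.
  have zx0 : z - x != 0 by rewrite subr_eq0.
  have zy0 : z - y != 0 by rewrite subr_eq0.
  by rewrite !nodal_weight_cons_neq //; field; rewrite zx0 zy0 xy0.
rewrite /divdiff_exp !big_cons weight_x weight_y !nodal_weight_cons_eq.
rewrite (eq_big_seq _ (fun z zs => congr1 _ (weight_tail z zs))) /=.
set Sx := \sum_(z <- s) _ * nodal_weight (x :: s) z.
set Sy := \sum_(z <- s) _ * nodal_weight (y :: s) z.
have -> : \sum_(z <- s) z ^+ m
      * ((nodal_weight (x :: s) z - nodal_weight (y :: s) z) / (x - y))
    = (Sx - Sy) / (x - y).
  by rewrite -sumrB mulr_suml; apply: eq_bigr => z _; rewrite mulrA mulrBr.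
by field; rewrite xy0 yx0.
Qed.

Lemma divdiff_exp_spec s : uniq s ->
  [/\ forall m, (m.+1 < size s)%N -> divdiff_exp s m = 0,
      forall m, m.+1 = size s -> divdiff_exp s m = 1
    & divdiff_exp s (size s) = \sum_(x <- s) x].
Proof.
have [k] := ubnP (size s); elim: k s => // k IH [|x [|y t]] /= lt_k us.
- by split => //; rewrite /divdiff_exp !big_nil.
- have w1 : nodal_weight [:: x] x = 1.
    by rewrite /nodal_weight big_cons big_nil eqxx invr1.
  by split=> [//|m [->]|]; rewrite /divdiff_exp !big_seq1 w1 mulr1 ?expr0 ?expr1.
have uxt : uniq (x :: t).
  by move: us; rewrite /= inE negb_or => /andP[/andP[_ ->] /andP[_ ->]].
have uyt : uniq (y :: t) by case/andP: us.
have xy0 : x - y != 0.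
  by move: us; rewrite /= inE negb_or subr_eq0 => /andP[/andP[-> _] _].
have [low_x deg_x degS_x] := IH (x :: t) lt_k uxt.
have [low_y deg_y degS_y] := IH (y :: t) lt_k uyt.
have low m : (m.+1 < (size t).+3)%N ->
    divdiff_exp [:: x, y & t] m = (m.+1 == (size t).+2)%:R.
  move=> lt_m; rewrite divdiff_exp_cons2 //.
  case: (ltngtP m.+1 (size t).+1) => [lt_mt|gt_mt|/= eq_mt].
  - by rewrite low_x // low_y // subrr mul0r ltn_eqF // ltnS ltnW.
  - have -> : m = (size t).+1 by lia.
    by rewrite degS_x degS_y !big_cons eqxx opprD addrACA subrr addr0 divff.
  - by rewrite deg_x // deg_y // subrr mul0r eq_mt ltn_eqF.
split=> [m lt_m|m eq_m|].
- by rewrite low ?ltn_eqF // ltnW.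
- by rewrite low eq_m ?eqxx.
- by rewrite divdiff_exp_cons_expS // low // eqxx mulr1 degS_y big_cons.
Qed.

Section DividedDifferencesAtDegree.
Variables (s : seq K) (g : nat).
Hypotheses (us : uniq s) (size_s : size s = g.+1).

Lemma divdiff_exp_lt m : (m < g)%N -> divdiff_exp s m = 0.
Proof. by case: (divdiff_exp_spec us) => low _ _ lt_m; apply: low; rewrite size_s. Qed.

Lemma divdiff_exp_deg : divdiff_exp s g = 1.
Proof. by case: (divdiff_exp_spec us) => _ deg _; apply: deg; rewrite size_s. Qed.

Lemma divdiff_exp_degS : divdiff_exp s g.+1 = \sum_(x <- s) x.
Proof. by case: (divdiff_exp_spec us) => _ _; rewrite size_s. Qed.

End DividedDifferencesAtDegree.

End DividedDifferences.

Lemma sum_map_replace (R : ringType) (c d : R) (s : seq R) : uniq s ->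
  \sum_(x <- map (fun x => if x == c then d else x) s) x
    = \sum_(x <- s) x + (c \in s)%:R * (d - c).
Proof.
elim: s => [|x s IH] /=; first by rewrite !big_nil mul0r addr0.
case/andP=> xs us; rewrite !big_cons IH // inE.
case: eqVneq => [<-|ne_xc] /=; last by rewrite addrA.
by rewrite (negPf xs) mul0r addr0 mul1r [RHS]addrC addrA subrK.
Qed.

Definition incr_mnm (n : nat) (g : 'I_n -> nat) (z : 'I_n) : 'X_{1..n} :=
  [multinom (g i + (i == z))%N | i < n].

Section GridCoefficients.
Variables (K : fieldType) (n : nat).
Implicit Types (P : {mpoly K[n]}) (s : 'I_n -> seq K) (g : 'I_n -> nat).

Lemma incr_mnm_inj g : injective (incr_mnm g).
Proof.
move=> z z' /(congr1 (fun m : 'X_{1..n} => m z)) /eqP.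
by rewrite !mnmE eqxx eqn_add2l eq_sym eqb1 => /eqP.
Qed.

Lemma sum_grid_prod s (G : 'I_n -> K -> K) M : (forall i, size (s i) <= M)%N ->
  \sum_(F in family (fun i => [pred j : 'I_M | (j < size (s i))%N]))
     \prod_i G i (nth 0 (s i) (F i)) = \prod_i \sum_(x <- s i) G i x.
Proof.
move=> le_sM; have nth_sum i : \sum_(x <- s i) G i x
    = \sum_(j : 'I_M | (j < size (s i))%N) G i (nth 0 (s i) j).
  rewrite (big_nth 0) big_mkord.
  exact: (big_ord_widen M (fun j => G i (nth 0 (s i) j)) (le_sM i)).
by under [RHS]eq_bigr => i _ do rewrite nth_sum; rewrite bigA_distr_big_dep.
Qed.

Lemma sum_mcoeff_divdiff_eq0 P s :
  (forall a, (forall i, a i \in s i) -> P.@[a] = 0) ->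
  \sum_(m <- msupp P) P@_m * \prod_i divdiff_exp (s i) (m i) = 0.
Proof.
move=> P_grid0; pose M := (\max_i size (s i))%N.
have le_sM i : (size (s i) <= M)%N by apply: (leq_bigmax i).
pose grid := family (fun i => [pred j : 'I_M | (j < size (s i))%N]).
pose node (F : {ffun 'I_n -> 'I_M}) i := nth 0 (s i) (F i).
have -> : \sum_(m <- msupp P) P@_m * \prod_i divdiff_exp (s i) (m i)
    = \sum_(F in grid) (\prod_i nodal_weight (s i) (node F i)) * P.@[node F].
  under eq_bigr => m _ do rewrite /divdiff_exp -(sum_grid_prod _ le_sM) mulr_sumr.
  rewrite exchange_big /=; apply: eq_bigr => F _.
  rewrite mevalE mulr_sumr; apply: eq_bigr => m _.
  by rewrite mulrCA -big_split; congr (_ * _); apply: eq_bigr => i _; rewrite mulrC.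
apply: big1 => F /familyP F_grid; rewrite P_grid0 ?mulr0 // => i.
exact/mem_nth/F_grid.
Qed.

Lemma sum_msupp_mcoeff_eq P m0 :
  \sum_(m <- msupp P) P@_m * (m == m0)%:R = P@_m0.
Proof.
rewrite [in RHS](mpolyE P) raddf_sum /=; apply: eq_bigr => m _.
by rewrite mcoeffZ mcoeffX.
Qed.

Section Grid.
Variables (s : 'I_n -> seq K) (g : 'I_n -> nat).
Hypotheses (us : forall i, uniq (s i)) (size_s : forall i, size (s i) = (g i).+1).

Lemma prod_divdiff_exp_eq0 (m : 'X_{1..n}) i :
  (m i < g i)%N -> \prod_j divdiff_exp (s j) (m j) = 0.
Proof.
by move=> lt_mg; rewrite (bigD1 i) //= (divdiff_exp_lt (us i) (size_s i)) ?mul0r.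
Qed.

Lemma prod_divdiff_exp_mdeg (m : 'X_{1..n}) : mdeg m = (\sum_i g i)%N ->
  \prod_i divdiff_exp (s i) (m i) = (m == [multinom g i | i < n])%:R.
Proof.
rewrite mdegE => deg_m.
have [/forallP le_gm|] := boolP [forall i, g i <= m i]%N; last first.
  case/forallPn => i; rewrite -ltnNge => lt_mg.
  rewrite (prod_divdiff_exp_eq0 lt_mg); case: eqP => // m_g.
  by move: lt_mg; rewrite m_g mnmE ltnn.
have {}m_g : m = [multinom g i | i < n].
  have : (\sum_i (m i - g i) == 0)%N.
    by rewrite sumnB => [|i _]; [rewrite deg_m subnn|apply: le_gm].
  rewrite sum_nat_eq0 => /forallP m_g; apply/mnmP => i; rewrite mnmE.
  by apply/eqP; rewrite eqn_leq -subn_eq0 (implyP (m_g i)) ?le_gm.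
by rewrite m_g eqxx; apply: big1 => i _; rewrite mnmE divdiff_exp_deg.
Qed.

Lemma prod_divdiff_exp_mdegS (m : 'X_{1..n}) : mdeg m = (\sum_i g i).+1 ->
  \prod_i divdiff_exp (s i) (m i)
    = \sum_z (m == incr_mnm g z)%:R * \sum_(x <- s z) x.
Proof.
rewrite mdegE => deg_m.
have [/forallP le_gm|] := boolP [forall i, g i <= m i]%N; last first.
  case/forallPn => i; rewrite -ltnNge => lt_mg.
  rewrite (prod_divdiff_exp_eq0 lt_mg) big1 // => z _.
  case: eqP => [m_g|_]; last by rewrite mul0r.
  by move: lt_mg; rewrite m_g mnmE ltnNge leq_addr.
have [z m_g] : exists z, m = incr_mnm g z.
  have : (\sum_i (m i - g i) == 1)%N.
    by rewrite sumnB => [|i _]; [rewrite deg_m subSnn|apply: le_gm].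
  case/sum_nat_eq1 => z [_ mz_gz mi_gi]; exists z; apply/mnmP => i; rewrite mnmE.
  have le_gmi := le_gm i.
  case: eqVneq => [->|ne_iz]; first by rewrite /= -mz_gz subnKC.
  by apply/eqP; rewrite addn0 eqn_leq -subn_eq0 le_gmi mi_gi.
rewrite (bigD1 z) //= big1 => [|i ne_iz]; last first.
  by rewrite m_g mnmE (negPf ne_iz) addn0 divdiff_exp_deg.
rewrite m_g mnmE eqxx addn1 divdiff_exp_degS // mulr1 (bigD1 z) //= eqxx mul1r.
rewrite [X in _ = _ + X]big1 ?addr0 // => z' ne_z'z.
by rewrite (inj_eq (@incr_mnm_inj g)) eq_sym (negPf ne_z'z) mul0r.
Qed.

Theorem combinatorial_nullstellensatz P :
  P \is (\sum_i g i)%N.-homog ->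
  (forall a, (forall i, a i \in s i) -> P.@[a] = 0) ->
  P@_[multinom g i | i < n] = 0.
Proof.
move=> homP P_grid0; rewrite -[RHS](sum_mcoeff_divdiff_eq0 P_grid0).
rewrite -sum_msupp_mcoeff_eq; apply: eq_big_seq => m m_supp.
by rewrite prod_divdiff_exp_mdeg // (dhomog_mf homP m_supp).
Qed.

Lemma combinatorial_nullstellensatz_succ P :
  P \is (\sum_i g i).+1.-homog ->
  (forall a, (forall i, a i \in s i) -> P.@[a] = 0) ->
  \sum_z P@_(incr_mnm g z) * \sum_(x <- s z) x = 0.
Proof.
move=> homP P_grid0; rewrite -[RHS](sum_mcoeff_divdiff_eq0 P_grid0).
under eq_bigr => z _ do rewrite -sum_msupp_mcoeff_eq mulr_suml.
rewrite exchange_big /=; apply: eq_big_seq => m m_supp.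
rewrite prod_divdiff_exp_mdegS ?(dhomog_mf homP m_supp) // mulr_sumr.
by apply: eq_bigr => z _; rewrite mulrA.
Qed.

End Grid.

Lemma combinatorial_nullstellensatz_succ_mem P s g (c d : K) :
  (forall i, uniq (s i)) -> (forall i, size (s i) = (g i).+1) ->
  d != c -> (forall i, d \notin s i) ->
  P \is (\sum_i g i).+1.-homog ->
  (forall a, (forall i, a i \in s i) -> P.@[a] = 0) ->
  (forall a, (forall i, a i \in map (fun x => if x == c then d else x) (s i)) ->
     P.@[a] = 0) ->
  \sum_z P@_(incr_mnm g z) * (c \in s z)%:R = 0.
Proof.
move=> us size_s ne_dc d_s homP P_grid0 P_grid'0.
have us' i : uniq (map (fun x => if x == c then d else x) (s i)).
  rewrite map_inj_in_uniq // => x y xs ys.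
  case: eqVneq => [->|_]; case: eqVneq => [->|_] //.
  - by move=> d_y; move: (d_s i); rewrite d_y ys.
  - by move=> x_d; move: (d_s i); rewrite -x_d xs.
have size_s' i : size (map (fun x => if x == c then d else x) (s i)) = (g i).+1.
  by rewrite size_map.
have := combinatorial_nullstellensatz_succ us' size_s' homP P_grid'0.
under eq_bigr => z _ do rewrite sum_map_replace // mulrDr mulrA.
rewrite big_split /= (combinatorial_nullstellensatz_succ us size_s homP P_grid0) add0r.
by rewrite -mulr_suml => /eqP; rewrite mulf_eq0 subr_eq0 (negPf ne_dc) orbF => /eqP.
Qed.

End GridCoefficients.

Section CoefInt.
Variable n : nat.
Implicit Types (q : {mpoly int[n]}) (g : 'I_n -> nat).

Lemma coef_int_nat (h : 'I_n -> int) g q : (forall u, h u = (g u)%:Z) ->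
  coef_int h q = q@_[multinom g i | i < n].
Proof.
move=> h_g; rewrite /coef_int; case: ifPn => [_|/forallPn[v]]; last by rewrite h_g.
by congr (_@_ _); apply/mnmP => i; rewrite !mnmE h_g.
Qed.

Lemma coef_int_incr (h : 'I_n -> int) g z q : (forall u, h u = (g u)%:Z) ->
  coef_int (fun u => h u + ind1 z u) q = q@_(incr_mnm g z).
Proof.
by move=> h_g; apply: coef_int_nat => u; rewrite h_g /ind1 PoszD; case: (u == z).
Qed.

Lemma sum_Posz (h : 'I_n -> int) g : (forall u, h u = (g u)%:Z) ->
  \sum_u h u = (\sum_u g u)%N%:Z.
Proof.
by move=> h_g; rewrite -natz natr_sum; apply: eq_bigr => u _; rewrite h_g natz.
Qed.

Lemma sum_ind1 (z : 'I_n) : \sum_u ind1 z u = 1.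
Proof.
rewrite (bigD1 z) //= big1 => [|u /negPf ne_uz]; last by rewrite /ind1 ne_uz.
by rewrite /ind1 eqxx addr0.
Qed.

Lemma coef_int_lt0 (h : 'I_n -> int) v q : h v < 0 -> coef_int h q = 0.
Proof.
by rewrite /coef_int ltNge => /negPf h_v; case: ifP => // /forallP/(_ v); rewrite h_v.
Qed.

End CoefInt.

Section GraphPolynomial.
Variables (K : comRingType) (n : nat) (e : rel 'I_n).

Definition graph_mpoly : {mpoly K[n]} := \prod_(p in edges e) ('X_p.2 - 'X_p.1).

Lemma mcoeff_graph_mpoly m : graph_mpoly@_m = ((graph_poly e)@_m)%:~R.
Proof.
have -> : graph_mpoly = map_mpoly intr (graph_poly e).
  rewrite /graph_mpoly /graph_poly rmorph_prod; apply: eq_bigr => p _.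
  by rewrite rmorphB /= !map_mpolyX.
by rewrite mcoeff_map_mpoly.
Qed.

Lemma graph_mpoly_homog : graph_mpoly \is #|edges e|.-homog.
Proof.
rewrite /graph_mpoly -big_enum /= cardE.
elim: (enum (edges e)) => [|p r IH]; first by rewrite big_nil dhomog1.
rewrite big_cons /= -add1n dhomogM // rpredB // dhomogX; apply/eqP; apply: mdeg1.
Qed.

Lemma graph_mpoly_meval_eq0 (a : 'I_n -> K) u v :
  simple_graph e -> e u v -> a u = a v -> graph_mpoly.@[a] = 0.
Proof.
move=> [sym_e irr_e] e_uv a_uv.
have [p e_p a_p] : exists2 p, p \in edges e & a p.1 = a p.2.
  case: (ltngtP u v) => [lt_uv|lt_vu|/val_inj eq_uv].
  - by exists (u, v); rewrite // inE lt_uv e_uv.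
  - by exists (v, u); rewrite // inE lt_vu sym_e e_uv.
  - by move: e_uv; rewrite eq_uv irr_e.
by rewrite rmorph_prod (bigD1 p) //= rmorphB /= !mevalXU a_p subrr mul0r.
Qed.

End GraphPolynomial.

Lemma fin_map_preimage (I : finType) (T U : eqType) (psi : T -> U)
    (t : I -> seq T) (a : I -> U) :
  (forall i, a i \in map psi (t i)) ->
  exists2 b : I -> T, forall i, b i \in t i & forall i, a i = psi (b i).
Proof.
by move=> a_t; apply: (@fin_all_exists2 I (fun=> T) _ _ (fun i => mapP (a_t i))).
Qed.

Lemma exists_ub_seq (R : realDomainType) (r : seq R) :
  exists d, {in r, forall x, x < d}.
Proof.
elim: r => [|x r [d ub_d]]; first by exists 0.
exists (Num.max (x + 1) d) => y; rewrite inE lt_max => /predU1P[->|y_r].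
  by rewrite ltrDl ltr01.
by rewrite ub_d ?orbT.
Qed.

Section ListColoring.
Variables (R : realType) (n : nat) (e : rel 'I_n) (L : 'I_n -> {fset R}).
Hypotheses (simple_e : simple_graph e) (not_colorable : ~ L_colorable e L).

Lemma noncolorable_conflict (a : 'I_n -> R) :
  (forall i, a i \in L i) -> exists u v, e u v /\ a u = a v.
Proof.
move=> a_L; have [/existsP[u /existsP[v /andP[e_uv /eqP a_uv]]]|no_conflict] :=
  boolP [exists u, exists v, e u v && (a u == a v)]; first by exists u, v.
case: not_colorable; exists a; split=> // u v e_uv.
by move/existsPn: no_conflict => /(_ u) /existsPn /(_ v); rewrite e_uv.
Qed.

Lemma graph_mpoly_grid_eq0 (s : 'I_n -> seq R) a :
  (forall i, {subset s i <= L i}) -> (forall i, a i \in s i) ->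
  (graph_mpoly R e).@[a] = 0.
Proof.
move=> s_L a_s.
have [u [v [e_uv a_uv]]] := noncolorable_conflict (fun i => s_L i _ (a_s i)).
exact: graph_mpoly_meval_eq0 simple_e e_uv a_uv.
Qed.

Let prefix (g : 'I_n -> nat) v := take (g v).+1 (enum_fset (L v)).

Let prefix_uniq g v : uniq (prefix g v).
Proof. exact/take_uniq/fset_uniq. Qed.

Let size_prefix g v : (g v < #|` L v|)%N -> size (prefix g v) = (g v).+1.
Proof. exact: size_takel. Qed.

Let prefix_sub g v : {subset prefix g v <= L v}.
Proof. by move=> x /mem_take. Qed.

Lemma coef_graph_poly_eq0 (h : 'I_n -> int) :
  (forall v, h v < (#|` L v|)%:Z) -> \sum_v h v = (#|edges e|)%:Z ->
  coef_int h (graph_poly e) = 0.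
Proof.
move=> h_L sum_h; have [/forallP h_ge0|/forallPn[v]] := boolP [forall v, 0 <= h v];
  last by rewrite -ltNge; apply: coef_int_lt0.
pose g v := absz (h v); have h_g v : h v = (g v)%:Z by rewrite /g gez0_abs.
have g_L v : (g v < #|` L v|)%N by rewrite -ltz_nat -h_g.
apply/eqP; rewrite (coef_int_nat _ h_g) -(intr_eq0 R) -mcoeff_graph_mpoly; apply/eqP.
apply: (combinatorial_nullstellensatz (prefix_uniq g) (fun v => size_prefix (g_L v))).
- suff -> : (\sum_i g i)%N = #|edges e| by apply: graph_mpoly_homog.
  by apply/eqP; rewrite -eqz_nat -sum_h (sum_Posz h_g).
- by move=> a; apply: graph_mpoly_grid_eq0; apply: prefix_sub.
Qed.

Lemma coef_graph_poly_incr_eq0 (f : 'I_n -> int) z :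
  (forall v, f v < (#|` L v|)%:Z) -> \sum_v f v = (#|edges e|)%:Z - 1 ->
  f z + 1 < (#|` L z|)%:Z ->
  coef_int (fun u => f u + ind1 z u) (graph_poly e) = 0.
Proof.
move=> f_L sum_f lt_fz; apply: coef_graph_poly_eq0 => [v|].
  by rewrite /ind1; case: eqVneq => [->|_]; rewrite ?addr0.
by rewrite big_split /= sum_f sum_ind1 subrK.
Qed.

Lemma exists_fresh_color (c : R) : exists2 d, d != c & forall i, d \notin L i.
Proof.
have [d ub_d] := exists_ub_seq (c :: flatten [seq enum_fset (L i) | i <- enum 'I_n]).
have : d \notin c :: flatten [seq enum_fset (L i) | i <- enum 'I_n].
  by apply/negP => /ub_d; rewrite ltxx.
rewrite inE negb_or => /andP[ne_dc d_L]; exists d => // i.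
by apply: contra d_L => d_Li; apply/flatten_mapP; exists i; rewrite ?mem_enum.
Qed.

Lemma sum_coef_incr_chi_ge0 (f : 'I_n -> int) (c : R) :
  (forall v, 0 <= f v) -> (forall v, f v < (#|` L v|)%:Z) ->
  \sum_v f v = (#|edges e|)%:Z - 1 ->
  \sum_z coef_int (fun u => f u + ind1 z u) (graph_poly e) * chi L c z = 0.
Proof.
move=> f_ge0 f_L sum_f.
pose g v := absz (f v); have f_g v : f v = (g v)%:Z by rewrite /g gez0_abs.
have g_L v : (g v < #|` L v|)%N by rewrite -ltz_nat -f_g.
have term z : coef_int (fun u => f u + ind1 z u) (graph_poly e) * chi L c z
    = (graph_poly e)@_(incr_mnm g z) * (c \in prefix g z)%:R.
  rewrite -(coef_int_incr _ _ f_g); have [lt_gL|le_Lg] := ltnP (g z).+1 #|` L z|.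
    by rewrite coef_graph_poly_incr_eq0 ?mul0r // f_g -PoszD addn1.
  by rewrite /chi /prefix take_oversize.
have [d ne_dc d_L] := exists_fresh_color c.
rewrite (eq_bigr _ (fun z _ => term z)); apply/eqP.
rewrite -(intr_eq0 R) rmorph_sum /=; apply/eqP.
under eq_bigr => z _ do rewrite rmorphM /= -mcoeff_graph_mpoly rmorph_nat.
apply: (combinatorial_nullstellensatz_succ_mem (prefix_uniq g)
          (fun v => size_prefix (g_L v)) ne_dc).
- by move=> i; apply: contra (d_L i); apply: prefix_sub.
- suff -> : (\sum_i g i).+1 = #|edges e| by apply: graph_mpoly_homog.
  by apply/eqP; rewrite -eqz_nat -addn1 PoszD -(sum_Posz f_g) sum_f subrK.
- by move=> a; apply: graph_mpoly_grid_eq0; apply: prefix_sub.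
- move=> a /fin_map_preimage [b b_s a_b].
  have [u [v [e_uv b_uv]]] := noncolorable_conflict (fun i => prefix_sub (b_s i)).
  by apply: graph_mpoly_meval_eq0 simple_e e_uv _; rewrite !a_b b_uv.
Qed.

End ListColoring.

Theorem theorem5 (R : realType) (n : nat) (e : rel 'I_n)
    (L : 'I_n -> {fset R}) (f : 'I_n -> int) :
  simple_graph e ->
  (forall v, f v < (#|` L v|)%:Z) ->
  \sum_(v < n) f v = (#|edges e|)%:Z - 1 ->
  ~ L_colorable e L ->
  forall c : R,
    \sum_(z < n) coef_int (fun u => f u + ind1 z u) (graph_poly e) * chi L c z
    = 0.
Proof.
move=> simple_e f_L sum_f not_colorable c.
have [/forallP f_ge0|/forallPn[v]] := boolP [forall v, 0 <= f v].
  exact: sum_coef_incr_chi_ge0.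
rewrite -ltNge => f_v_lt0; rewrite (bigD1 v) //= big1 ?addr0 => [|z ne_zv].
  rewrite /chi; have [c_L|] := boolP (c \in L v); last by rewrite mulr0.
  have : (0 < #|` L v|)%N by rewrite cardfs_gt0; apply/fset0Pn; exists c.
  rewrite -ltz_nat => L_gt0.
  by rewrite (coef_graph_poly_incr_eq0 simple_e not_colorable) ?mul0r //; lia.
by rewrite (coef_int_lt0 (v := v)) ?mul0r // /ind1 eq_sym (negPf ne_zv) addr0.
Qed.
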